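(* Let $\mathcal S$ be a trajectory set and fix $n\in\mathbb N$. Define for $S\in\mathcal S$ $$\tau(S):=\min\Big(\inf\{j\in\{1,\dots,n\}:\ \mathcal S_{(S,j-1)}\text{ is an arbitrage node of type I and }S_j\neq S_{j-1}\},\ n+1\Big)$$ (with $\inf\emptyset=+\infty$). Then: (i) for every $S\in\mathcal S$ and $i\in\{0,\dots,n\}$, if $\tau(S)>i$ then there exists $\tilde S\in\mathcal S\setminus\mathcal N_n$ with $(S_0,\dots,S_i)=(\tilde S_0,\dots,\tilde S_i)$; (ii) in the reduced trajectory set $\tilde{\mathcal S}:=\mathcal S\setminus\mathcal N_n$, for every $i\le n-1$ and $S\in\tilde{\mathcal S}$, the node $\tilde{\mathcal S}_{(S,i)}$ (computed in $\tilde{\mathcal S}$) is an up-down node if $\mathcal S_{(S,i)}$ is an up-down node in $\mathcal S$, and it is flat if $\mathcal S_{(S,i)}$ is flat or an arbitrage node of type I in $\mathcal S$.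
   Context: Fix $s_0\in\mathbb R$. A trajectory set is any set $\mathcal T$ of real sequences $S=(S_j)_{j\in\mathbb N_0}$ with $S_0=s_0$. For $S\in\mathcal T$ and $j\in\mathbb N_0$, the node (conditional space) is $\mathcal T_{(S,j)}=\{\tilde S\in\mathcal T:(\tilde S_0,\dots,\tilde S_j)=(S_0,\dots,S_j)\}$. The node $\mathcal T_{(S,j)}$ is an arbitrage node if there is $\varepsilon\in\{-1,1\}$ with $\varepsilon(\tilde S_{j+1}-S_j)\ge0$ for every $\tilde S\in\mathcal T_{(S,j)}$ and strict inequality for at least one $\tilde S\in\mathcal T_{(S,j)}$; an arbitrage node is of type I if some $S'\in\mathcal T_{(S,j)}$ has $S'_{j+1}=S_j$, and of type II otherwise. The node is flat if $\tilde S_{j+1}=S_j$ for every $\tilde S\in\mathcal T_{(S,j)}$, and up-down if it is neither flat nor an arbitrage node. For $n\in\mathbb N$, $\mathcal N_n:=\{S\in\mathcal S:\ \mathcal S_{(S,j)}\text{ is an arbitrage node of type I and }S_{j+1}\ne S_j\text{ for some }j\le n-1\}$. *)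

From Stdlib Require Import Reals.
Open Scope R_scope.

Definition traj := nat -> R.

Definition is_traj_set (s0 : R) (T : traj -> Prop) : Prop :=
  forall S, T S -> S 0%nat = s0.

Definition node (T : traj -> Prop) (S : traj) (j : nat) : traj -> Prop :=
  fun S' => T S' /\ (forall k, (k <= j)%nat -> S' k = S k).

Definition arb_node (T : traj -> Prop) (S : traj) (j : nat) : Prop :=
  exists eps : R, (eps = 1 \/ eps = -1) /\
    (forall S', node T S j S' -> 0 <= eps * (S' (j + 1)%nat - S j)) /\
    (exists S', node T S j S' /\ 0 < eps * (S' (j + 1)%nat - S j)).

Definition arb_node_I (T : traj -> Prop) (S : traj) (j : nat) : Prop :=
  arb_node T S j /\ exists S', node T S j S' /\ S' (j + 1)%nat = S j.

Definition arb_node_II (T : traj -> Prop) (S : traj) (j : nat) : Prop :=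
  arb_node T S j /\ ~ (exists S', node T S j S' /\ S' (j + 1)%nat = S j).

Definition flat_node (T : traj -> Prop) (S : traj) (j : nat) : Prop :=
  forall S', node T S j S' -> S' (j + 1)%nat = S j.

Definition updown_node (T : traj -> Prop) (S : traj) (j : nat) : Prop :=
  ~ flat_node T S j /\ ~ arb_node T S j.

Definition N_set (T : traj -> Prop) (n : nat) : traj -> Prop :=
  fun S => T S /\ exists j, (j < n)%nat /\ arb_node_I T S j /\ S (j + 1)%nat <> S j.

Definition reduced (T : traj -> Prop) (n : nat) : traj -> Prop :=
  fun S => T S /\ ~ N_set T n S.

(* "tau(S) > i" where
   tau(S) = min(inf{j in 1..n : T_(S,j-1) arbitrage node of type I and S_j <> S_(j-1)}, n+1).
   For i <= n this holds iff no such j satisfies j <= i. *)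
Definition tau_gt (T : traj -> Prop) (n : nat) (S : traj) (i : nat) : Prop :=
  forall j, (1 <= j)%nat -> (j <= n)%nat -> (j <= i)%nat ->
    ~ (arb_node_I T S (j - 1) /\ S j <> S (j - 1)%nat).

From Stdlib Require Import Reals Lia Lra Classical.
Open Scope R_scope.

(* (i): extend the prefix one step at a time; whenever the current trajectory
   sits at a type-I arbitrage node, switch to a trajectory that stays flat
   there (one exists by the definition of type I).  The result never moves out
   of a type-I node before time n, so it survives the reduction.
   (ii): at a node that is not of type I, every successor in the original set
   is, by (i), the next value of a surviving trajectory, so up and down moves
   survive; a surviving trajectory cannot move out of a type-I node, so such a
   node becomes flat.  The initial value s0 plays no role. *)

Definition agree_upto (X Y : traj) (j : nat) : Prop :=
  forall k, (k <= j)%nat -> X k = Y k.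

Lemma agree_upto_sym X Y j : agree_upto X Y j -> agree_upto Y X j.
Proof. intros H k Hk; symmetry; auto. Qed.

Lemma agree_upto_trans X Y Z j :
  agree_upto X Y j -> agree_upto Y Z j -> agree_upto X Z j.
Proof. intros HXY HYZ k Hk; rewrite HXY by exact Hk; auto. Qed.

Lemma agree_upto_le X Y j j' :
  (j' <= j)%nat -> agree_upto X Y j -> agree_upto X Y j'.
Proof. intros Hj H k Hk; apply H; lia. Qed.

Section Nodes.

Variable T : traj -> Prop.

Lemma node_agree A B j X : agree_upto A B j -> node T A j X -> node T B j X.
Proof.
  intros HAB [HX HXA]; split; [exact HX|].
  exact (agree_upto_trans _ _ _ _ HXA HAB).
Qed.

Lemma arb_node_agree A B j : agree_upto A B j -> arb_node T A j -> arb_node T B j.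
Proof.
  intros HAB [eps [Heps [Hall [X [HX HXs]]]]].
  assert (HBA := agree_upto_sym _ _ _ HAB).
  unfold arb_node; rewrite <- (HAB j) by lia.
  exists eps; split; [exact Heps|split].
  - intros Y HY; exact (Hall Y (node_agree _ _ _ _ HBA HY)).
  - exists X; split; [exact (node_agree _ _ _ _ HAB HX) | exact HXs].
Qed.

Lemma arb_node_I_agree A B j :
  agree_upto A B j -> arb_node_I T A j -> arb_node_I T B j.
Proof.
  intros HAB [Harb [X [HX HXflat]]]; split.
  - exact (arb_node_agree _ _ _ HAB Harb).
  - exists X; split; [exact (node_agree _ _ _ _ HAB HX)|].
    rewrite HXflat; apply HAB; lia.
Qed.

Lemma arb_node_of_one_sided eps S j :
  (eps = 1 \/ eps = -1) -> ~ flat_node T S j ->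
  (forall Y, node T S j Y -> 0 <= eps * (Y (j + 1)%nat - S j)) ->
  arb_node T S j.
Proof.
  intros Heps Hnflat Hall.
  exists eps; split; [exact Heps|split; [exact Hall|]].
  apply not_all_ex_not in Hnflat as [Y HY].
  apply imply_to_and in HY as [HY Hmove].
  exists Y; split; [exact HY|].
  assert (eps * (Y (j + 1)%nat - S j) <> 0).
  { apply Rmult_integral_contrapositive; split; [lra|].
    intro E; apply Hmove; lra. }
  specialize (Hall Y HY); lra.
Qed.

Lemma updown_node_iff S j :
  updown_node T S j <->
  (exists Y, node T S j Y /\ S j < Y (j + 1)%nat) /\
  (exists Y, node T S j Y /\ Y (j + 1)%nat < S j).
Proof.
  split.
  - intros [Hnflat Hnarb]; split; apply NNPP; intro Hnone; apply Hnarb.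
    + apply (arb_node_of_one_sided (-1)); [right; reflexivity | exact Hnflat |].
      intros Y HY; destruct (Rlt_or_le (S j) (Y (j + 1)%nat)); [|lra].
      exfalso; apply Hnone; exists Y; auto.
    + apply (arb_node_of_one_sided 1); [left; reflexivity | exact Hnflat |].
      intros Y HY; destruct (Rlt_or_le (Y (j + 1)%nat) (S j)); [|lra].
      exfalso; apply Hnone; exists Y; auto.
  - intros [[Yu [HYu Hup]] [Yd [HYd Hdown]]]; split.
    + intro Hflat; specialize (Hflat Yu HYu); lra.
    + intros [eps [[-> | ->] [Hall _]]].
      * specialize (Hall Yd HYd); lra.
      * specialize (Hall Yu HYu); lra.
Qed.

End Nodes.

Lemma flat_node_subset (T T' : traj -> Prop) S j :
  (forall Y, T' Y -> T Y) -> flat_node T S j -> flat_node T' S j.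
Proof. intros Hsub Hflat Y [HY HYS]; apply Hflat; split; auto. Qed.

Section Reduction.

Variables (T : traj -> Prop) (n : nat).

Definition no_arbI_move (Y : traj) (m : nat) : Prop :=
  forall j, (j < m)%nat -> arb_node_I T Y j -> Y (j + 1)%nat = Y j.

Lemma no_arbI_move_le Y m m' :
  (m' <= m)%nat -> no_arbI_move Y m -> no_arbI_move Y m'.
Proof. intros Hm H j Hj; apply H; lia. Qed.

Lemma no_arbI_move_snoc Y m :
  no_arbI_move Y m -> (arb_node_I T Y m -> Y (m + 1)%nat = Y m) ->
  no_arbI_move Y (S m).
Proof.
  intros H Hm j Hj; destruct (Nat.eq_dec j m) as [-> | Hjm]; [exact Hm|].
  apply H; lia.
Qed.

Lemma no_arbI_move_agree Y Z m :
  agree_upto Y Z m -> no_arbI_move Y m -> no_arbI_move Z m.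
Proof.
  intros HYZ H j Hj HZ.
  assert (HZY := agree_upto_sym _ _ _ HYZ).
  rewrite <- !HYZ by lia.
  apply H; [exact Hj|].
  exact (arb_node_I_agree T Z Y j (agree_upto_le Z Y m j ltac:(lia) HZY) HZ).
Qed.

Lemma no_arbI_move_of_tau_gt S i :
  (i <= n)%nat -> tau_gt T n S i -> no_arbI_move S i.
Proof.
  intros Hi Htau j Hj HI.
  destruct (Req_dec (S (j + 1)%nat) (S j)) as [E | Hmove]; [exact E|].
  exfalso; apply (Htau (j + 1)%nat); try lia.
  replace (j + 1 - 1)%nat with j by lia; auto.
Qed.

Lemma no_arbI_move_of_reduced S : reduced T n S -> no_arbI_move S n.
Proof.
  intros [HS HnN] j Hj HI.
  destruct (Req_dec (S (j + 1)%nat) (S j)) as [E | Hmove]; [exact E|].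
  exfalso; apply HnN; split; [exact HS|]; exists j; auto.
Qed.

Lemma reduced_of_no_arbI_move S : T S -> no_arbI_move S n -> reduced T n S.
Proof.
  intros HS H; split; [exact HS|].
  intros [_ [j [Hj [HI Hmove]]]]; exact (Hmove (H j Hj HI)).
Qed.

Lemma no_arbI_move_step Y m :
  T Y -> no_arbI_move Y m ->
  exists Z, T Z /\ agree_upto Y Z m /\ no_arbI_move Z (S m).
Proof.
  intros HY H.
  destruct (classic (arb_node_I T Y m)) as [HI | HnI].
  - destruct HI as [_ [Z [[HZ HZY] HZflat]]].
    assert (HYZ := agree_upto_sym _ _ _ HZY).
    exists Z; split; [|split]; [exact HZ | exact HYZ |].
    apply no_arbI_move_snoc; [exact (no_arbI_move_agree _ _ _ HYZ H)|].
    intros _; rewrite HZflat; apply HYZ; lia.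
  - exists Y; split; [|split]; [exact HY | intros k _; reflexivity |].
    apply no_arbI_move_snoc; [exact H | intro HI; contradiction].
Qed.

Lemma no_arbI_move_extend Y i m :
  (i <= m)%nat -> T Y -> no_arbI_move Y i ->
  exists Z, T Z /\ agree_upto Y Z i /\ no_arbI_move Z m.
Proof.
  intros Him HY H; induction Him as [| m Him IH].
  - exists Y; split; [exact HY | split; [intros k _; reflexivity | exact H]].
  - destruct IH as [Z [HZ [HYZ HZm]]].
    destruct (no_arbI_move_step Z m HZ HZm) as [Z' [HZ' [HZZ' HZ'm]]].
    exists Z'; split; [|split]; [exact HZ' | | exact HZ'm].
    exact (agree_upto_trans _ _ _ _ HYZ (agree_upto_le _ _ _ _ Him HZZ')).
Qed.

Lemma reduced_extension S i :
  (i <= n)%nat -> T S -> no_arbI_move S i ->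
  exists S', reduced T n S' /\ agree_upto S S' i.
Proof.
  intros Hi HS H.
  destruct (no_arbI_move_extend S i n Hi HS H) as [S' [HS' [HSS' HS'n]]].
  exists S'; split; [exact (reduced_of_no_arbI_move S' HS' HS'n) | exact HSS'].
Qed.

Lemma successor_survives X i Y :
  (i < n)%nat -> reduced T n X -> ~ arb_node_I T X i -> node T X i Y ->
  exists Z, node (reduced T n) X i Z /\ Z (i + 1)%nat = Y (i + 1)%nat.
Proof.
  intros Hi HXr HnI [HY HYX].
  assert (HYi : no_arbI_move Y (S i)).
  { apply no_arbI_move_snoc.
    - apply (no_arbI_move_agree X); [exact (agree_upto_sym _ _ _ HYX)|].
      exact (no_arbI_move_le X n i ltac:(lia) (no_arbI_move_of_reduced X HXr)).
    - intro HI; exfalso; exact (HnI (arb_node_I_agree T Y X i HYX HI)). }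
  destruct (reduced_extension Y (S i) ltac:(lia) HY HYi) as [Z [HZ HYZ]].
  assert (HYZi := agree_upto_le Y Z (S i) i ltac:(lia) HYZ).
  exists Z; split.
  - split; [exact HZ|].
    exact (agree_upto_trans _ _ _ _ (agree_upto_sym _ _ _ HYZi) HYX).
  - symmetry; apply HYZ; lia.
Qed.

Lemma arb_node_I_flat_in_reduced S i :
  (i < n)%nat -> arb_node_I T S i -> flat_node (reduced T n) S i.
Proof.
  intros Hi HI Y [HYr HYS].
  rewrite <- (HYS i) by lia.
  apply (no_arbI_move_of_reduced Y HYr i Hi).
  exact (arb_node_I_agree T S Y i (agree_upto_sym _ _ _ HYS) HI).
Qed.

End Reduction.

Theorem proposition5p5 (s0 : R) (T : traj -> Prop) (n : nat)
  (HT : is_traj_set s0 T) :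
  (forall (S : traj) (i : nat), T S -> (i <= n)%nat -> tau_gt T n S i ->
     exists S', reduced T n S' /\ (forall k, (k <= i)%nat -> S k = S' k)) /\
  (forall (i : nat) (S : traj), (i < n)%nat -> reduced T n S ->
     (updown_node T S i -> updown_node (reduced T n) S i) /\
     (flat_node T S i \/ arb_node_I T S i -> flat_node (reduced T n) S i)).
Proof.
  split.
  { intros S i HS Hi Htau.
    exact (reduced_extension T n S i Hi HS (no_arbI_move_of_tau_gt T n S i Hi Htau)). }
  intros i S Hi HSr; split.
  - intros Hud.
    assert (HnI : ~ arb_node_I T S i) by (intros [Harb _]; exact (proj2 Hud Harb)).
    apply updown_node_iff in Hud as [[Yu [HYu Hup]] [Yd [HYd Hdown]]].
    destruct (successor_survives T n S i Yu Hi HSr HnI HYu) as [Zu [HZu Eu]].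
    destruct (successor_survives T n S i Yd Hi HSr HnI HYd) as [Zd [HZd Ed]].
    apply updown_node_iff; split; [exists Zu | exists Zd]; split; auto; lra.
  - intros [Hflat | HI].
    + exact (flat_node_subset T _ S i (fun Y HY => proj1 HY) Hflat).
    + exact (arb_node_I_flat_in_reduced T n S i Hi HI).
Qed.
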